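(* If $P$ is the Petersen graph, then $\operatorname{H}(P)=6$.
   Context: All graphs are finite, simple and undirected. In hopping forcing each vertex is colored blue or white, and initially a set $B\subseteq V(G)$ is blue. The hopping color change rule: a blue vertex $v$ may force a white vertex $w$ to become blue if $v$ has not previously performed a force and every neighbor of $v$ is blue. A chronological list of forces of $B$ is a sequence of such forces applied one at a time starting from $B$ until no further force is possible. $B$ is a hopping forcing set if some chronological list of forces of $B$ turns every vertex blue. $\operatorname{H}(G)$ is the minimum size of a hopping forcing set of $G$. *)

From mathcomp Require Import all_boot.
Set Implicit Arguments. Unset Strict Implicit. Unset Printing Implicit Defensive.

(* A simple graph on a finite vertex type T is given by an adjacency
   relation [e] (symmetric and irreflexive). *)

(* The state of the process is the pair (B, F) where B is
   the current set of blue vertices and F the set of vertices that have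
   already performed a force.  [hop_reach e B F B'] means: starting from the
   state (B, F), some finite chronological sequence of hopping forces yields
   the blue set B'. *)
Inductive hop_reach (T : finType) (e : rel T) :
  {set T} -> {set T} -> {set T} -> Prop :=
| hop_done (B F : {set T}) : hop_reach e B F B
| hop_force (B F B' : {set T}) (v w : T) :
    v \in B -> v \notin F -> (forall u, e v u -> u \in B) -> w \notin B ->
    hop_reach e (w |: B) (v |: F) B' -> hop_reach e B F B'.

(* B is a hopping forcing set: some chronological list of forces starting
   from B (with no vertex having forced yet) turns every vertex blue.  (Once
   every vertex is blue no further force is possible, so such a list is
   complete.) *)
Definition hopping_forcing_set (T : finType) (e : rel T) (B : {set T}) : Prop :=
  hop_reach e B set0 [set: T].

Definition hopping_number (T : finType) (e : rel T) (k : nat) : Prop :=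
  (exists B : {set T}, hopping_forcing_set e B /\ #|B| = k) /\
  (forall B : {set T}, hopping_forcing_set e B -> k <= #|B|).

(* The Petersen graph, as the Kneser graph K(5,2): vertices are the
   2-element subsets of {0,...,4}, adjacent iff disjoint. *)
Definition petersen_vertex := {A : {set 'I_5} | #|A| == 2}.

Definition petersen_adj : rel petersen_vertex :=
  fun A B => [disjoint (val A) & (val B)].

From mathcomp Require Import all_boot.
Set Implicit Arguments. Unset Strict Implicit. Unset Printing Implicit Defensive.

(* Since every force
   colours one more vertex, fuel n suffices, and the search is shown to be
   sound and complete for [hop_reach]; consequently H(G) = k follows from two
   finite checks over all 2^n codes: some code with k ones forces, and no code
   with fewer ones does (lemma [hopping_number_search]). *)

Section LabelledGraph.

Variables (T : finType) (e : rel T) (n : nat) (lab : nat -> T) (adj : nat -> nat -> bool).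

Hypothesis card_T : #|T| = n.
Hypothesis lab_inj : forall i j, i < n -> j < n -> lab i = lab j -> i = j.
Hypothesis adjE : forall i j, i < n -> j < n -> e (lab i) (lab j) = adj i j.

(* Injectivity and the count of vertices make the numbering exhaustive. *)
Lemma lab_onto (x : T) : exists2 i, i < n & lab i = x.
Proof.
pose f (i : 'I_n) := lab i.
have f_inj : injective f by move=> i j /(lab_inj (ltn_ord i) (ltn_ord j)) /val_inj.
have onto_f : #|T| <= #|'I_n| by rewrite card_T card_ord.
have /codomP [i ->] := inj_card_onto f_inj onto_f x.
by exists i.
Qed.

Definition code (B : {set T}) : seq bool := [seq lab i \in B | i <- iota 0 n].

Lemma size_code B : size (code B) = n.
Proof. by rewrite size_map size_iota. Qed.

Lemma nth_code B i : nth false (code B) i = (i < n) && (lab i \in B).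
Proof.
have [lt_in|le_ni] := ltnP i n; last by rewrite nth_default ?size_code.
by rewrite (nth_map 0) ?size_iota ?nth_iota.
Qed.

Lemma code_setU1 B j : j < n -> code (lab j |: B) = set_nth false (code B) j true.
Proof.
move=> lt_jn; apply: (@eq_from_nth _ false) => [|i].
  by rewrite size_set_nth !size_code; apply/esym/maxn_idPr.
rewrite size_code => lt_in; rewrite nth_set_nth /= !nth_code lt_in in_setU1.
have [-> | ne_ij] := eqVneq i j; first by rewrite eqxx.
by case: eqP => // /(lab_inj lt_in lt_jn) eq_ij; rewrite eq_ij eqxx in ne_ij.
Qed.

Lemma code_set0 : code set0 = nseq n false.
Proof.
apply: (@eq_from_nth _ false) => [|i]; rewrite size_code ?size_nseq // => lt_in.
by rewrite nth_code nth_nseq lt_in inE.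
Qed.

Lemma all_code B : all id (code B) = (B == setT).
Proof.
apply/allP/eqP => [all_in | ->]; last by move=> _ /mapP [i _ ->]; rewrite inE.
apply/setP => x; rewrite inE; have [i lt_in <-] := lab_onto x.
by apply: all_in; apply: map_f; rewrite mem_iota.
Qed.

Lemma card_code (B : {set T}) : #|B| = count id (code B).
Proof.
pose s := [seq lab i | i <- [seq i <- iota 0 n | lab i \in B]].
have uniq_s : uniq s.
  rewrite map_inj_in_uniq ?filter_uniq ?iota_uniq // => i j.
  rewrite !mem_filter !mem_iota => /and3P [_ _ lt_in] /and3P [_ _ lt_jn].
  exact: lab_inj.
have -> : #|B| = #|s|.
  apply: eq_card => x; have [i lt_in <-] := lab_onto x.
  apply/idP/mapP => [iB | [j]]; first by exists i; rewrite // mem_filter iB mem_iota.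
  by rewrite mem_filter mem_iota => /and3P [jB _ lt_jn] /(lab_inj lt_in lt_jn) ->.
by rewrite (card_uniqP uniq_s) size_map size_filter count_map.
Qed.

Definition decode (b : seq bool) : {set T} :=
  [set x | has (fun i => (lab i == x) && nth false b i) (iota 0 n)].

Lemma code_decode b : size b = n -> code (decode b) = b.
Proof.
move=> size_b; apply: (@eq_from_nth _ false) => [|i]; first by rewrite size_code.
rewrite size_code => lt_in; rewrite nth_code lt_in inE.
apply/hasP/idP => [[j] | b_i]; last by exists i; rewrite ?mem_iota ?eqxx.
by rewrite mem_iota => /andP [_ lt_jn] /andP [/eqP /(lab_inj lt_jn lt_in) ->].
Qed.

(* Conditionals rather than boolean connectives keep the evaluation lazy under
   the call-by-value [vm_compute]. *)
Fixpoint hop_search (fuel : nat) (b done : seq bool) : bool :=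
  if all id b then true else
  if fuel is k.+1 then
    has (fun v =>
      if [&& nth false b v, ~~ nth false done v &
             all (nth false b) [seq u <- iota 0 n | adj v u]] then
        has (fun w =>
          if nth false b w then false
          else hop_search k (set_nth false b w true) (set_nth false done v true))
        (iota 0 n)
      else false)
    (iota 0 n)
  else false.

Lemma hop_searchE fuel b done :
  hop_search fuel b done =
  all id b ||
  if fuel is k.+1 then
    has (fun v => [&& nth false b v, ~~ nth false done v,
                      all (nth false b) [seq u <- iota 0 n | adj v u] &
                      has (fun w => ~~ nth false b w &&
                             hop_search k (set_nth false b w true)
                                          (set_nth false done v true))
                          (iota 0 n)])
        (iota 0 n)
  else false.
Proof.
case: fuel => [|k] /=; case: (all id b) => //; apply: eq_has => v.
case: (nth false b v); case: (nth false done v); case: all => //.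
by apply: eq_has => w; case: nth.
Qed.

Lemma hop_search_sound fuel B F :
  hop_search fuel (code B) (code F) -> hop_reach e B F setT.
Proof.
elim: fuel B F => [|k IH] B F; rewrite hop_searchE.
  by rewrite orbF all_code => /eqP ->; constructor.
case/orP => [|/hasP [v]]; first by rewrite all_code => /eqP ->; constructor.
rewrite mem_iota => /andP [_ lt_vn] /and4P [vB vF nbrs /hasP [w]].
rewrite mem_iota => /andP [_ lt_wn] /andP [wB forced].
rewrite !nth_code lt_vn lt_wn /= in vB vF wB.
apply: (hop_force (v := lab v) (w := lab w)) => // [u | ]; last first.
  by apply: IH; rewrite !code_setU1.
have [i lt_in <-] := lab_onto u; rewrite adjE // => adj_vi.
by have := allP nbrs i; rewrite mem_filter adj_vi mem_iota lt_in nth_code lt_in; apply.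
Qed.

(* Each force turns one white vertex blue, so [#|~: B|] steps of fuel suffice. *)
Lemma hop_search_complete B F fuel :
  hop_reach e B F setT -> #|~: B| <= fuel -> hop_search fuel (code B) (code F).
Proof.
move Efull: setT => full reach; elim: reach Efull fuel =>
  {B F full} [B F | B F B' v w vB vF nbrs wB _ IH] Efull fuel white_le.
  by rewrite hop_searchE all_code -Efull eqxx.
case: fuel white_le => [|k] white_le.
  by move: white_le; rewrite leqn0 cards_eq0 => /eqP/setP/(_ w); rewrite !inE (negbTE wB).
have [i lt_in Ev] := lab_onto v; have [j lt_jn Ew] := lab_onto w; subst v w.
rewrite hop_searchE; apply/orP; right; apply/hasP; exists i; first by rewrite mem_iota.
apply/and4P; split; rewrite ?nth_code ?lt_in //.
  apply/allP => u; rewrite mem_filter mem_iota => /and3P [adj_iu _ lt_un].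
  by rewrite nth_code lt_un nbrs ?adjE.
apply/hasP; exists j; first by rewrite mem_iota.
rewrite nth_code lt_jn wB -!code_setU1 //; apply: IH => //.
rewrite setCU -ltnS (leq_trans _ white_le) // (cardsD1 (lab j) (~: B)) inE wB.
by rewrite ltnS subset_leq_card //; apply/subsetP => x; rewrite !inE => /andP [-> ->].
Qed.

Lemma hopping_forcing_setE B :
  hopping_forcing_set e B <-> hop_search n (code B) (nseq n false).
Proof.
rewrite -code_set0; split => [forcing | /hop_search_sound //].
by apply: hop_search_complete forcing _; rewrite -card_T max_card.
Qed.

Fixpoint bitseqs (m : nat) : seq (seq bool) :=
  if m is k.+1 then map (cons true) (bitseqs k) ++ map (cons false) (bitseqs k)
  else [:: [::]].

Lemma mem_bitseqs b : b \in bitseqs (size b).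
Proof. by elim: b => //= -[] b IH; rewrite mem_cat (map_f _ IH) ?orbT. Qed.

Lemma size_bitseqs m b : b \in bitseqs m -> size b = m.
Proof.
elim: m b => [|m IH] b /=; first by rewrite inE => /eqP ->.
by rewrite mem_cat => /orP [] /mapP [c /IH <- ->].
Qed.

Lemma hopping_number_search k :
  has (fun b => if count id b == k then hop_search n b (nseq n false) else false)
      (bitseqs n) ->
  all (fun b => if count id b < k then ~~ hop_search n b (nseq n false) else true)
      (bitseqs n) ->
  hopping_number e k.
Proof.
move=> /hasP [b /size_bitseqs size_b]; case: eqP => // count_b search_b small_fail.
split.
  exists (decode b); rewrite card_code code_decode //.
  by split=> //; apply/hopping_forcing_setE; rewrite code_decode.
move=> B /hopping_forcing_setE search_B; rewrite leqNgt card_code.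
apply: contraL search_B => few_ones.
have := allP small_fail (code B); rewrite -[X in bitseqs X](size_code B) mem_bitseqs.
by rewrite few_ones; apply.
Qed.

End LabelledGraph.

(* The ten 2-subsets of {0,...,4}; vertex i of the Petersen graph is the
   pair number i (indices beyond 9 default to the first pair). *)
Definition pet_pairs : seq (nat * nat) :=
  [:: (0, 1); (0, 2); (0, 3); (0, 4); (1, 2); (1, 3); (1, 4); (2, 3); (2, 4); (3, 4)].

Definition pet_pair (i : nat) : nat * nat := nth (0, 1) pet_pairs i.

Lemma pet_pair_ok i :
  [&& (pet_pair i).1 < 5, (pet_pair i).2 < 5 & (pet_pair i).1 != (pet_pair i).2].
Proof.
have [lt_i10 | le_10i] := ltnP i 10; last by rewrite /pet_pair nth_default.
by do 10?[case: i lt_i10 => [|i] lt_i10].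
Qed.

Lemma inord5_eq (k l : nat) : k < 5 -> l < 5 -> (inord k == inord l :> 'I_5) = (k == l).
Proof. by move=> lt_k5 lt_l5; rewrite -val_eqE /= !inordK. Qed.

Definition pet_set (i : nat) : {set 'I_5} :=
  [set inord (pet_pair i).1; inord (pet_pair i).2].

Lemma card_pet_set i : #|pet_set i| == 2.
Proof.
by case/and3P: (pet_pair_ok i) => lt_a5 lt_b5 ne_ab; rewrite cards2 inord5_eq ?ne_ab.
Qed.

Definition pet_lab (i : nat) : petersen_vertex := exist _ (pet_set i) (card_pet_set i).

Definition pet_mem (i k : nat) : bool := (k == (pet_pair i).1) || (k == (pet_pair i).2).

Lemma mem_pet_set i (x : 'I_5) : (x \in pet_set i) = pet_mem i x.
Proof.
case/and3P: (pet_pair_ok i) => lt_a5 lt_b5 _.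
by rewrite !inE -(inord_val x) !inord5_eq ?inord_val.
Qed.

Definition pet_adj (i j : nat) : bool :=
  ~~ has (fun k => pet_mem i k && pet_mem j k) (iota 0 5).

Lemma pet_adjE i j : petersen_adj (pet_lab i) (pet_lab j) = pet_adj i j.
Proof.
rewrite /petersen_adj /= disjoints_subset; apply/subsetP/hasPn => [disj k | disj x xi].
  rewrite mem_iota => lt_k5; rewrite -[k]/(val (Ordinal lt_k5)) -!mem_pet_set.
  by apply/negP => /andP [/disj]; rewrite in_setC => /negP.
by have := disj x; rewrite mem_iota ltn_ord -!mem_pet_set xi in_setC => /(_ isT).
Qed.

(* Distinct pairs have distinct membership patterns. *)
Definition pet_pattern (i : nat) : seq bool := [seq pet_mem i k | k <- iota 0 5].

Lemma uniq_pet_patterns : uniq [seq pet_pattern i | i <- iota 0 10].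
Proof. by []. Qed.

Lemma pet_lab_inj i j : i < 10 -> j < 10 -> pet_lab i = pet_lab j -> i = j.
Proof.
move=> lt_i10 lt_j10 /(congr1 val) /= eq_set.
have eq_pattern : pet_pattern i = pet_pattern j.
  apply/eq_in_map => k; rewrite mem_iota => lt_k5.
  by rewrite -[k]/(val (Ordinal lt_k5)) -!mem_pet_set eq_set.
have index_pattern l :
    l < 10 -> index (pet_pattern l) [seq pet_pattern i | i <- iota 0 10] = l.
  move=> lt_l10.
  have -> : pet_pattern l = nth [::] [seq pet_pattern i | i <- iota 0 10] l.
    by rewrite (nth_map 0) ?size_iota // nth_iota.
  by rewrite index_uniq ?uniq_pet_patterns // size_map size_iota.
by rewrite -(index_pattern i) // eq_pattern index_pattern.
Qed.

Lemma card_petersen : #|{: petersen_vertex}| = 10.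
Proof. by rewrite card_sig -cardsE card_draws card_ord. Qed.

Theorem mainTheorem4 : hopping_number petersen_adj 6.
Proof.
apply: (hopping_number_search card_petersen pet_lab_inj (fun i j _ _ => pet_adjE i j)).
-
  by vm_compute.
-
  by vm_compute.
Qed.
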